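(* Let $k\ge4$ and let $C_k=\{x_{j_1}x_{j_2}\cdots x_{j_{k-3}}x_j^2:\ 1\le j_1<j_2<\dots<j_{k-3}<k,\ j_1\le j<k\}\subset P_{k-1}$. Then $C_k$ is exactly the set of admissible monomials $z$ in $P_{k-1}$ with weight vector $\omega(z)=(k-3,1,0,0,\dots)$. Consequently $\dim QP_{k-1}((k-3,1,0,\dots))=(k-3)\binom k2$.
   Context: $P_{k-1}=\mathbb F_2[x_1,\dots,x_{k-1}]$, $\deg x_i=1$, a module over the mod-2 Steenrod algebra $\mathcal A$, with augmentation ideal $\mathcal A^+$. For $a=\sum_i\alpha_i(a)2^i$ ($\alpha_i(a)\in\{0,1\}$) and a monomial $x=x_1^{a_1}\cdots x_{m}^{a_{m}}$, $\nu_j(x)=a_j$, the weight vector is $\omega(x)=(\omega_1(x),\omega_2(x),\dots)$ with $\omega_i(x)=\sum_j\alpha_{i-1}(\nu_j(x))$, and $\sigma(x)=(\nu_1(x),\dots,\nu_m(x))$. Weight vectors and sigma vectors are ordered left-lexicographically. For monomials $x,y$ of the same degree, $x<y$ iff $\omega(x)<\omega(y)$, or $\omega(x)=\omega(y)$ and $\sigma(x)<\sigma(y)$. A monomial $x$ is inadmissible if there are monomials $y_1,\dots,y_m$ with $y_t<x$ for all $t$ and $x-\sum_t y_t\in\mathcal A^+P_{k-1}$; otherwise it is admissible. For a weight vector $\omega$ (eventually-zero sequence, $\deg\omega=\sum_i2^{i-1}\omega_i$), $P(\omega)$ is spanned by monomials $y$ with $\deg y=\deg\omega$ and $\omega(y)\le\omega$,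 $P^-(\omega)$ by those with $\omega(y)<\omega$, and $QP_{k-1}(\omega)=P_{k-1}(\omega)/\big((\mathcal A^+P_{k-1}\cap P_{k-1}(\omega))+P_{k-1}^-(\omega)\big)$. *)

From HB Require Import structures.
From mathcomp Require Import all_boot all_order all_algebra.
Set Implicit Arguments. Unset Strict Implicit. Unset Printing Implicit Defensive.

(* Variable x_{j+1} of the paper is indexed by j : 'I_n.                   *)
Definition mon (n : nat) := {ffun 'I_n -> nat}.

Definition mdeg n (x : mon n) : nat := \sum_(j < n) x j.

(* Polynomials over F_2 : finite lists of monomials, the coefficient of a  *)
(* monomial being the parity of its multiplicity (so ++ is addition).      *)
Definition coef n (p : seq (mon n)) (y : mon n) : bool := odd (count_mem y p).

(* Sq^i on a monomial (Cartan formula):                                    *)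
(* Sq^i(x_1^{a_1}...x_n^{a_n}) = sum_{t_1+...+t_n=i} prod_j C(a_j,t_j)     *)
(*                                  x_1^{a_1+t_1} ... x_n^{a_n+t_n}.       *)
Definition Sq n (i : nat) (x : mon n) : seq (mon n) :=
  map (fun t : {ffun 'I_n -> 'I_i.+1} => ([ffun j => x j + t j] : mon n))
    (filter (fun t : {ffun 'I_n -> 'I_i.+1} =>
       (\sum_(j < n) (t j : nat) == i) && odd (\prod_(j < n) 'C(x j, t j)))
       (enum {: {ffun 'I_n -> 'I_i.+1}})).

(* p lies in A^+ P_n : p is a (finite, F_2-)sum of elements Sq^i(g),       *)
(* i > 0, g a monomial.  (A^+ P_n = sum_{i>0} Im Sq^i.)                     *)
Definition hit n (p : seq (mon n)) : Prop :=
  exists gs : seq (nat * mon n),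
    (forall ig, ig \in gs -> 0 < ig.1) /\
    forall y, coef p y = coef (flatten [seq Sq ig.1 ig.2 | ig <- gs]) y.

(* Weight vector, 0-indexed: omega x i = omega_{i+1}(x) of the paper       *)
Definition omega n (x : mon n) (i : nat) : nat := \sum_(j < n) odd (x j %/ 2 ^ i).

Definition lexlt (f g : nat -> nat) : Prop :=
  exists i, (forall j, j < i -> f j = g j) /\ f i < g i.

Definition sigmalt n (x y : mon n) : Prop :=
  exists i : 'I_n, (forall j : 'I_n, (j < i)%N -> x j = y j) /\ x i < y i.

Definition monlt n (y x : mon n) : Prop :=
  mdeg y = mdeg x /\
  (lexlt (omega y) (omega x) \/ (omega y =1 omega x /\ sigmalt y x)).

Definition inadmissible n (x : mon n) : Prop :=
  exists ys : seq (mon n), (forall y, y \in ys -> monlt y x) /\ hit (x :: ys).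

Definition admissible n (x : mon n) : Prop := ~ inadmissible x.

(* Weight vectors as finite lists (omega_{i+1} = nth 0 w i, rest zero).    *)
Definition wfun (w : seq nat) (i : nat) : nat := nth 0 w i.
Definition wdeg (w : seq nat) : nat := \sum_(i < size w) 2 ^ i * nth 0 w i.

(* Boolean lexicographic comparison on the first L coordinates.  Used with *)
(* L = wdeg w + size w, beyond which all vectors considered below vanish    *)
(* (a monomial of degree d has omega_i = 0 for i >= d), so this is exactly  *)
(* the lexicographic order on weight vectors.                              *)
Definition lexltb (L : nat) (f g : nat -> nat) : bool :=
  has (fun i => all (fun j => f j == g j) (iota 0 i) && (f i < g i)) (iota 0 L).
Definition lexeqb (L : nat) (f g : nat -> nat) : bool :=
  all (fun j => f j == g j) (iota 0 L).

Section QP.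
Variables (n : nat) (w : seq nat).
Local Notation d := (wdeg w).
Local Notation L := (wdeg w + size w).
Local Notation T := {ffun 'I_n -> 'I_d.+1}.
Local Notation N := #|{: T}|.
Local Notation K := #|{: 'I_d.+1 * T}|.

Definition expo (t : T) : mon n := [ffun j => nat_of_ord (t j)].

Definition rowOf (p : seq (mon n)) : 'rV['F_2]_N :=
  \row_(c < N) ((coef p (expo (enum_val c)) : nat)%:R)%R.

Definition Pw_mx : 'M['F_2]_N :=
  \matrix_(c < N) (let y := expo (enum_val c) in
    if (mdeg y == d) && (lexltb L (omega y) (wfun w) || lexeqb L (omega y) (wfun w))
    then rowOf [:: y] else 0%R).

Definition Pwm_mx : 'M['F_2]_N :=
  \matrix_(c < N) (let y := expo (enum_val c) in
    if (mdeg y == d) && lexltb L (omega y) (wfun w)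
    then rowOf [:: y] else 0%R).

Definition hit_mx : 'M['F_2]_(K, N) :=
  \matrix_(c < K) (let ig := enum_val c in
    if (0 < (ig.1 : nat)) && (mdeg (expo ig.2) + ig.1 == d)
    then rowOf (Sq ig.1 (expo ig.2)) else 0%R).

Definition QPdim : nat :=
  \rank Pw_mx - \rank ((hit_mx :&: Pw_mx) + Pwm_mx)%MS.
End QP.

(* the set C_k (here n = k-1 variables, 0-indexed):                         *)
Definition inC (k : nat) (z : mon (k - 1)) : Prop :=
  exists (S : {set 'I_(k - 1)}) (j : 'I_(k - 1)),
    [/\ #|S| = k - 3, [exists s in S, (s <= j)%N] &
        z = [ffun i => ((i \in S) : nat) + 2 * ((i == j) : nat)]].

(* Write x_S for the product of the variables indexed by S.  On monomials with
   all exponents at most 3, a square Sq^i (i > 0) can only raise exponents from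
   1 to 2, since C(a, b) with 0 < b and a + b <= 3 is odd only for a = b = 1.
   Hence a monomial without exponent 2 lies in no square, and x_T x_v (v in T)
   lies only in Sq^1 x_T.

   The monomials of weight (m, 1, 0, ...) are the x_S x_j^2 with |S| = m.  If
   j < min S, then Sq^1 x_{S+j} = x_S x_j^2 + sum_{v in S} x_{S+j} x_v expresses
   x_S x_j^2 through smaller monomials.  Otherwise x_S x_j^2 is admissible: for
   j in S it has exponent 3 at j and lies in no square; for j not in S its
   "mate" x_{S+j} x_t, t = min S < j, is larger and lies in exactly the same
   squares, so both have the same coefficient in every hit polynomial.

   For the dimension, the same two functionals (one coordinate, resp. the sum of
   the coordinates of a monomial and its mate) vanish on the hits and on
   P^-(omega), so C_k is independent modulo (A^+P cap P(omega)) + P^-(omega),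
   while the Sq^1 relations above show that C_k spans.  Counting the pairs
   (S, j) gives (k - 3) C(k, 2). *)

From HB Require Import structures.
From mathcomp Require Import all_boot all_order all_algebra.
From mathcomp Require Import zify.

Set Implicit Arguments. Unset Strict Implicit. Unset Printing Implicit Defensive.

Lemma sum_nat_bool (T : finType) (P : pred T) :
  \sum_(x : T) (P x : nat) = #|[set x | P x]|.
Proof.
rewrite -sum1dep_card [RHS]big_mkcond /=; apply: eq_bigr => x _; by case: (P x).
Qed.

Lemma sum_nat_eq1 (T : finType) (j : T) : \sum_(x : T) (x == j : nat) = 1.
Proof. by rewrite (bigD1 j) //= big1 ?eqxx // => x /negbTE ->. Qed.

Lemma sum_nat_bool_eq1 (T : finType) (P : pred T) :
  \sum_(x : T) (P x : nat) = 1 -> exists j, forall x, P x = (x == j).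
Proof.
case: (pickP P) => [j Pj|P0]; last by rewrite big1 // => x _; rewrite P0.
rewrite (bigD1 j) //= Pj => /eqP; rewrite eqSS => /eqP /eqP.
rewrite sum_nat_eq0 => /forallP h; exists j => x.
case: (eqVneq x j) => [->//|xj]; have := h x; rewrite xj /=; by case: (P x).
Qed.

Section Monomials.
Variable n : nat.
Implicit Types (g y : mon n) (S T : {set 'I_n}) (u v j : 'I_n).

Lemma coef_uniq (p : seq (mon n)) y : uniq p -> coef p y = (y \in p).
Proof. by move=> u; rewrite /coef count_uniq_mem //; case: (y \in p). Qed.

Lemma Sq_uniq i g : uniq (Sq i g).
Proof.
rewrite /Sq map_inj_uniq; first by apply: filter_uniq; apply: enum_uniq.
move=> t t' /ffunP E; apply/ffunP => v; apply: ord_inj.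
by have := E v; rewrite !ffunE => /eqP; rewrite eqn_add2l => /eqP.
Qed.

Lemma coef_Sq i g y : coef (Sq i g) y = (y \in Sq i g).
Proof. exact/coef_uniq/Sq_uniq. Qed.

Lemma mem_Sq i g y :
  y \in Sq i g <-> exists t : {ffun 'I_n -> 'I_i.+1},
    [/\ \sum_(j < n) (t j : nat) = i, odd (\prod_(j < n) 'C(g j, t j)) &
        y = [ffun j => g j + t j]].
Proof.
split; last first.
  by case=> t [h1 h2 ->]; apply: map_f; rewrite mem_filter mem_enum h1 h2 eqxx.
case/mapP => t; rewrite mem_filter mem_enum andbT => /andP [/eqP h1 h2] ->.
by exists t.
Qed.

Lemma Sq_small_step i g y (t : {ffun 'I_n -> 'I_i.+1}) :
  (forall v, y v <= 3) -> odd (\prod_(j < n) 'C(g j, t j)) ->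
  y = [ffun j => g j + t j] ->
  forall v, 0 < t v -> [/\ y v = 2, g v = 1 & (t v : nat) = 1].
Proof.
move=> hy ho hE v tv.
have := hy v; have := tv; rewrite hE ffunE.
move: ho; rewrite (bigD1 v) //= oddM => /andP [].
by case: (g v) => [|[|[|[|a]]]]; case: (t v : nat) => [|[|[|[|b]]]].
Qed.

Lemma Sq_notin_two_free i g y : (forall v, y v <= 3) -> (forall v, y v != 2) ->
  0 < i -> y \notin Sq i g.
Proof.
move=> h3 h2 hi; apply/negP => /mem_Sq [t [hs ho hy]].
have t0 v : (t v : nat) = 0.
  case: (posnP (t v)) => // tv.
  by have [e _ _] := Sq_small_step h3 ho hy tv; move: (h2 v); rewrite e.
by move: hi; rewrite -hs big1.
Qed.

Lemma Sq_single_two i h y (a : 'I_n) : (forall v, y v <= 3) -> y a = 2 ->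
  (forall v, v != a -> y v != 2) -> 0 < i ->
  y \in Sq i h <-> i = 1 /\ h = [ffun v => y v - (v == a)].
Proof.
move=> h3 ha h2 hi; split.
  case/mem_Sq => t [hs ho hy].
  have t0 v : v != a -> (t v : nat) = 0.
    move=> va; case: (posnP (t v)) => // tv.
    by have [e _ _] := Sq_small_step h3 ho hy tv; move: (h2 v va); rewrite e.
  have hsa : \sum_(j < n) (t j : nat) = t a.
    by rewrite (bigD1 a) //= big1 ?addn0 // => v /t0.
  have ta : 0 < t a by rewrite -hsa hs.
  have [_ ga t1] := Sq_small_step h3 ho hy ta.
  split; first by rewrite -hs hsa t1.
  apply/ffunP => v; rewrite hy !ffunE.
  case: (eqVneq v a) => [->|va]; first by rewrite t1 ga.
  by rewrite t0 //= addn0 subn0.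
move=> [-> eh]; apply/mem_Sq; exists [ffun v => if v == a then ord_max else ord0].
split.
- by rewrite (bigD1 a) //= big1 ?ffunE ?eqxx // => v va; rewrite ffunE (negbTE va).
- rewrite (bigD1 a) //= big1 ?ffunE ?eqxx ?muln1; first by rewrite eh ffunE eqxx ha.
  by move=> v va; rewrite ffunE (negbTE va) bin0.
- apply/ffunP => v; rewrite eh !ffunE.
  by case: (eqVneq v a) => [->|va]; [rewrite ha | rewrite subn0 addn0].
Qed.

Definition xset T : mon n := [ffun u => (u \in T : nat)].
Definition xset_mul T v : mon n := [ffun u => (u \in T : nat) + (u == v : nat)].
Definition xset_sq S j : mon n := [ffun u => (u \in S : nat) + 2 * (u == j : nat)].

Lemma xset_mul_inj T : injective (xset_mul T).
Proof.
move=> v v' /ffunP /(_ v); rewrite !ffunE eqxx.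
by case: (v \in T); case: (eqVneq v v').
Qed.

Lemma xset_sq_inj S S' j j' : xset_sq S j = xset_sq S' j' -> S = S' /\ j = j'.
Proof.
move=> /ffunP e.
have ev v : (v \in S : nat) + 2 * (v == j : nat) = (v \in S' : nat) + 2 * (v == j' : nat).
  by have := e v; rewrite !ffunE.
split; first by apply/setP => v; have := ev v;
  case: (v \in S); case: (v \in S'); case: (v == j); case: (v == j').
by have := ev j; rewrite eqxx; case: (j \in S); case: (j \in S'); case: (eqVneq j j').
Qed.

Lemma xset_mul_sq T v : v \in T -> xset_mul T v = xset_sq (T :\ v) v.
Proof.
move=> vT; apply/ffunP => u; rewrite !ffunE in_setD1.
by case: (eqVneq u v) => [->|]; rewrite ?vT.
Qed.

Lemma xset_sq_mul S j : j \notin S -> xset_sq S j = xset_mul (j |: S) j.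
Proof.
move=> jS; apply/ffunP => u; rewrite !ffunE in_setU1.
by case: (eqVneq u j) => [->|]; rewrite ?(negbTE jS).
Qed.

Lemma xset_mul_le3 T v u : xset_mul T v u <= 3.
Proof. by rewrite ffunE; case: (u \in T); case: (u == v). Qed.

Lemma xset_sq_le3 S j u : xset_sq S j u <= 3.
Proof. by rewrite ffunE; case: (u \in S); case: (u == j). Qed.

Lemma mdeg_xset T : mdeg (xset T) = #|T|.
Proof.
rewrite /mdeg; under eq_bigr do rewrite ffunE.
by rewrite sum_nat_bool; apply: eq_card => v; rewrite inE.
Qed.

Lemma mdeg_xset_sq S j : mdeg (xset_sq S j) = #|S| + 2.
Proof.
rewrite /mdeg; under eq_bigr do rewrite ffunE.
rewrite big_split /= -big_distrr /= sum_nat_eq1 sum_nat_bool muln1.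
by congr (_ + _); apply: eq_card => v; rewrite inE.
Qed.

Lemma wfun2E m i : wfun [:: m; 1] i = if i == 0 then m else if i == 1 then 1 else 0.
Proof. by rewrite /wfun; case: i => [|[|i]] //=; rewrite nth_nil. Qed.

Lemma omega_xset_sq S j : omega (xset_sq S j) =1 wfun [:: #|S|; 1].
Proof.
move=> i; rewrite wfun2E /omega; under eq_bigr do rewrite ffunE.
case: i => [|[|i]] /=.
- under eq_bigr => v _ do (have -> : odd (((v \in S) + 2 * (v == j)) %/ 2 ^ 0) = (v \in S)
    by case: (v \in S); case: (v == j)).
  by rewrite sum_nat_bool; apply: eq_card => v; rewrite inE.
- under eq_bigr => v _ do (have -> : odd (((v \in S) + 2 * (v == j)) %/ 2 ^ 1) = (v == j)
    by case: (v \in S); case: (v == j)).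
  exact: sum_nat_eq1.
- rewrite big1 // => v _; rewrite divn_small //.
  apply: (@leq_ltn_trans 3); first by case: (v \in S); case: (v == j).
  by rewrite !expnS; have := expn_gt0 2 i; lia.
Qed.

Lemma mem_Sq_xset_mul i T v h : v \in T -> 0 < i ->
  xset_mul T v \in Sq i h <-> i = 1 /\ h = xset T.
Proof.
move=> vT hi.
have -> : xset T = [ffun u => xset_mul T v u - (u == v)].
  by apply/ffunP => u; rewrite !ffunE addnK.
apply: Sq_single_two => //; first exact: xset_mul_le3.
  by rewrite ffunE vT eqxx.
by move=> u uv; rewrite ffunE (negbTE uv) addn0; case: (u \in T).
Qed.

Lemma Sq1_xset T : Sq 1 (xset T) =i [seq xset_mul T v | v <- enum T].
Proof.
move=> y; apply/idP/idP; last first.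
  by case/mapP => v; rewrite mem_enum => vT ->; apply/mem_Sq_xset_mul.
case/mem_Sq => t [hs ho hy].
have [a ta] : exists a, (t a : nat) != 0.
  apply/existsP; apply: contraT; rewrite negb_exists => /forallP h.
  by move: hs; rewrite big1 // => v _; have := h v; rewrite negbK => /eqP.
have ta1 : (t a : nat) = 1.
  by move: ta (ltn_ord (t a)); case: (t a : nat) => [|[|]].
have t0 u : u != a -> (t u : nat) = 0.
  move: hs; rewrite (bigD1 a) //= ta1 add1n => /eqP; rewrite eqSS sum_nat_eq0.
  by move=> /forallP /(_ u) + ua; rewrite ua => /eqP.
have aT : a \in T.
  by move: ho; rewrite (bigD1 a) //= oddM ta1 ffunE => /andP []; case: (a \in T).
apply/mapP; exists a; first by rewrite mem_enum.
rewrite hy; apply/ffunP => u; rewrite !ffunE.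
by case: (eqVneq u a) => [->|ua]; rewrite ?ta1 ?t0.
Qed.

Lemma map_xset_mul_uniq T (s : seq 'I_n) : uniq s -> uniq [seq xset_mul T v | v <- s].
Proof. by move=> us; rewrite map_inj_uniq //; exact: xset_mul_inj. Qed.

Lemma xset_sq_notin_Sq i g S j : j \in S -> 0 < i -> xset_sq S j \notin Sq i g.
Proof.
move=> jS; apply: Sq_notin_two_free; first exact: xset_sq_le3.
move=> v; rewrite ffunE; case: (eqVneq v j) => [->|]; first by rewrite jS.
by case: (v \in S).
Qed.

(* Both monomials are [x_{S+j}] times one variable of [S + j], so both lie
   exactly in [Sq^1 x_{S+j}]. *)
Lemma Sq_mate i g S j t : t \in S -> j \notin S -> 0 < i ->
  (xset_sq S j \in Sq i g) = (xset_mul (j |: S) t \in Sq i g).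
Proof.
move=> tS jS hi; rewrite xset_sq_mul //.
have jT : j \in j |: S by rewrite setU11.
have tT : t \in j |: S by rewrite setU1r.
apply/idP/idP.
  by move=> /(mem_Sq_xset_mul _ jT hi) /(mem_Sq_xset_mul _ tT hi).
by move=> /(mem_Sq_xset_mul _ tT hi) /(mem_Sq_xset_mul _ jT hi).
Qed.

Lemma omega_ge2_lt4 y : (forall i, 2 <= i -> omega y i = 0) -> forall v, y v < 4.
Proof.
move=> h v; rewrite ltnNge; apply/negP => h4.
set i := trunc_log 2 (y v).
have lo : 2 ^ i <= y v by apply: trunc_logP; lia.
have hi : y v < 2 ^ i.+1 by apply: trunc_log_ltn.
have i2 : 2 <= i.
  rewrite leqNgt; apply/negP => il; move: hi; rewrite expnS.
  have : 2 ^ i <= 2 ^ 1 by rewrite leq_exp2l //; lia.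
  lia.
have q1 : y v %/ 2 ^ i = 1.
  apply/eqP; rewrite eqn_leq; apply/andP; split.
    by rewrite -ltnS ltn_divLR ?expn_gt0 // -expnS.
  by rewrite leq_divRL ?expn_gt0 // mul1n.
have := h i i2; rewrite /omega (bigD1 v) //= q1 /=; lia.
Qed.

Lemma omega_weight2_xset_sq m y : omega y =1 wfun [:: m; 1] ->
  exists S j, #|S| = m /\ y = xset_sq S j.
Proof.
move=> hom; have h1 := hom 1; rewrite wfun2E /omega expn1 in h1.
have y4 : forall v, y v < 4.
  by apply: omega_ge2_lt4 => i hi; rewrite hom wfun2E; case: i hi => [|[|]].
have ey v : y v = odd (y v) + 2 * odd (y v %/ 2).
  by move: (y4 v); case: (y v) => [|[|[|[|]]]].
have [j hj] := sum_nat_bool_eq1 h1.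
exists [set v | odd (y v)], j; split.
  rewrite -sum_nat_bool (_ : m = wfun [:: m; 1] 0) // -(hom 0).
  by apply: eq_bigr => v _; rewrite expn0 divn1.
by apply/ffunP => v; rewrite ffunE inE -hj -ey.
Qed.

Lemma mdeg_xset_mul T v : v \in T -> mdeg (xset_mul T v) = #|T|.-1 + 2.
Proof. by move=> vT; rewrite xset_mul_sq // mdeg_xset_sq (cardsD1 v T) vT. Qed.

Lemma omega_xset_mul T v : v \in T -> omega (xset_mul T v) =1 wfun [:: #|T|.-1; 1].
Proof. by move=> vT i; rewrite xset_mul_sq // omega_xset_sq (cardsD1 v T) vT. Qed.

Lemma monlt_irr y : ~ monlt y y.
Proof. by case=> _ [[i [_]] | [_ [i [_]]]]; rewrite ltnn. Qed.

Lemma sigmalt_asym y y' : sigmalt y y' -> ~ sigmalt y' y.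
Proof.
case=> i [hi lti] [i' [hi' lti']].
case: (ltngtP i i') => [ii'|i'i|/val_inj eii'].
- by move: lti; rewrite hi' // ltnn.
- by move: lti'; rewrite hi // ltnn.
- by move: lti'; rewrite -eii' ltnNge ltnW.
Qed.

Lemma sigmalt_xset_mul T u v : u < v -> sigmalt (xset_mul T v) (xset_mul T u).
Proof.
move=> uv; have vu : (u == v) = false by apply: contraTF uv => /eqP ->; rewrite ltnn.
exists u; split; last by rewrite !ffunE eqxx vu addn0 addn1.
move=> u' u'u; rewrite !ffunE.
have -> : (u' == u) = false by apply: contraTF u'u => /eqP ->; rewrite ltnn.
by have -> : (u' == v) = false by apply: contraTF u'u => /eqP ->; rewrite -leqNgt ltnW.
Qed.

Lemma monlt_xset_mul T u v : u \in T -> v \in T -> u < v ->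
  monlt (xset_mul T v) (xset_mul T u).
Proof.
move=> uT vT uv; split; first by rewrite !mdeg_xset_mul.
right; split; last exact: sigmalt_xset_mul.
by move=> i; rewrite !omega_xset_mul.
Qed.

Lemma not_monlt_xset_mul T u v : u \in T -> v \in T -> u < v ->
  ~ monlt (xset_mul T u) (xset_mul T v).
Proof.
move=> uT vT uv [_ [[i [_]] | [_ /sigmalt_asym]]].
  by rewrite (omega_xset_mul uT) (omega_xset_mul vT) ltnn.
by apply; apply: sigmalt_xset_mul.
Qed.

Lemma coef_Sqs (gs : seq (nat * mon n)) y :
  coef (flatten [seq Sq ig.1 ig.2 | ig <- gs]) y
  = odd (\sum_(ig <- gs) (y \in Sq ig.1 ig.2)).
Proof.
rewrite /coef count_flatten -map_comp sumnE big_map; congr odd.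
by apply: eq_bigr => ig _ /=; rewrite count_uniq_mem ?Sq_uniq.
Qed.

Lemma min_elt_below S j : [exists s in S, s <= j] -> j \notin S ->
  exists t, [/\ t \in S, t < j & forall s, s \in S -> t <= s].
Proof.
case/existsP => s1 /andP [s1S s1j] jS.
case: (@arg_minnP _ s1 (mem S) val s1S) => t tS hmin.
exists t; split => //; rewrite ltn_neqAle (leq_trans (hmin _ s1S) s1j) andbT.
by apply: contraNneq jS => /val_inj <-.
Qed.

Lemma admissible_xset_sq S j : [exists s in S, s <= j] -> admissible (xset_sq S j).
Proof.
move=> hex [ys [hys [gs [hpos hco]]]].
have zys : xset_sq S j \notin ys by apply/negP => /hys /monlt_irr.
have := hco (xset_sq S j); rewrite /coef /= eqxx (count_memPn zys) -/(coef _ _) coef_Sqs.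
case: (boolP (j \in S)) => jS.
  by rewrite big1_seq // => ig /andP [_ /hpos hi]; rewrite (negbTE (xset_sq_notin_Sq _ jS hi)).
have [t [tS tj hmin]] := min_elt_below hex jS.
have jT : j \in j |: S by rewrite setU11.
have tT : t \in j |: S by rewrite setU1r.
set m := xset_mul (j |: S) t.
have mys : m \notin ys.
  by apply/negP => /hys; rewrite xset_sq_mul //; apply: not_monlt_xset_mul.
have mz : m != xset_sq S j.
  by rewrite xset_sq_mul //; apply: contraTneq tj => /xset_mul_inj ->; rewrite ltnn.
have := hco m; rewrite /coef /= (count_memPn mys) eq_sym (negbTE mz) -/(coef _ _) coef_Sqs.
by under eq_big_seq => ig igs do rewrite -(Sq_mate _ tS jS (hpos ig igs)); move=> <-.
Qed.

Lemma inadmissible_xset_sq S j : ~~ [exists s in S, s <= j] -> inadmissible (xset_sq S j).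
Proof.
move=> hn; have hS s : s \in S -> j < s.
  by move=> sS; rewrite ltnNge; apply: contra hn => sj; apply/existsP; exists s; rewrite sS.
have jS : j \notin S by apply/negP => /hS; rewrite ltnn.
set T := j |: S; have jT : j \in T by rewrite setU11.
exists [seq xset_mul T v | v <- enum S]; split.
  move=> y /mapP [v]; rewrite mem_enum => vS ->; rewrite xset_sq_mul //.
  by apply: monlt_xset_mul => //; [rewrite setU1r | apply: hS].
exists [:: (1, xset T)]; split; first by move=> ig; rewrite inE => /eqP ->.
move=> y; rewrite /= cats0 xset_sq_mul // -map_cons coef_Sq coef_uniq; last first.
  by rewrite map_xset_mul_uniq //= mem_enum jS enum_uniq.
rewrite Sq1_xset; apply: eq_mem_map => u.
by rewrite inE !mem_enum in_setU1.
Qed.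

Lemma admissible_weight2P m z :
  (exists S j, [/\ #|S| = m, [exists s in S, s <= j] & z = xset_sq S j]) <->
  admissible z /\ omega z =1 wfun [:: m; 1].
Proof.
split.
  case=> S [j [<- hex ->]]; split; [exact: admissible_xset_sq | exact: omega_xset_sq].
case=> hadm /omega_weight2_xset_sq [S [j [hS ez]]]; exists S, j; split => //.
case: (boolP [exists s in S, s <= j]) => // hn.
by case: hadm; rewrite ez; apply: inadmissible_xset_sq.
Qed.

End Monomials.

Import GRing.Theory.

Section Coordinates.
Variables (n : nat) (w : seq nat).
Local Notation d := (wdeg w).
Local Notation T := {ffun 'I_n -> 'I_d.+1}.
Local Notation N := #|{: T}|.
Implicit Types (y : mon n) (p q : seq (mon n)).

Definition mcode y : T := [ffun v => inord (y v)].
Definition mindex y : 'I_N := enum_rank (mcode y).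

Lemma expo_inj : injective (@expo n w).
Proof.
by move=> t t' /ffunP e; apply/ffunP => v; apply: ord_inj; have := e v; rewrite !ffunE.
Qed.

Lemma expo_mcode y : (forall v, y v <= d) -> expo (mcode y) = y.
Proof. by move=> h; apply/ffunP => v; rewrite !ffunE inordK // ltnS. Qed.

Lemma expo_mindex y : (forall v, y v <= d) -> expo (enum_val (mindex y)) = y.
Proof. by move=> h; rewrite /mindex enum_rankK expo_mcode. Qed.

Lemma mindex_expo (c : 'I_N) : mindex (expo (enum_val c)) = c.
Proof.
rewrite /mindex (_ : mcode _ = enum_val c) ?enum_valK //.
by apply/ffunP => v; rewrite !ffunE inord_val.
Qed.

Lemma rowOfE p (c : 'I_N) : rowOf w p ord0 c = ((coef p (expo (enum_val c)) : nat)%:R)%R.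
Proof. by rewrite mxE. Qed.

Lemma rowOf1 y (c : 'I_N) : rowOf w [:: y] ord0 c = ((y == expo (enum_val c) : nat)%:R)%R.
Proof. by rewrite rowOfE /coef /= addn0 eq_sym; case: (_ == _). Qed.

Lemma rowOf_cat p q : rowOf w (p ++ q) = (rowOf w p + rowOf w q)%R.
Proof.
apply/rowP => c; rewrite [RHS]mxE !rowOfE /coef count_cat oddD.
by case: (odd _); case: (odd _); rewrite /= ?add0r ?addr0 //; apply/esym/eqP.
Qed.

Lemma rowOf_eq p q : coef p =1 coef q -> rowOf w p = rowOf w q.
Proof. by move=> e; apply/rowP => c; rewrite !rowOfE e. Qed.

Lemma rowOf_map (A : eqType) (f : A -> mon n) (s : seq A) :
  rowOf w (map f s) = (\sum_(x <- s) rowOf w [:: f x])%R.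
Proof.
elim: s => [|x s IH]; first by rewrite big_nil; apply/rowP => c; rewrite rowOfE mxE.
by rewrite big_cons /= -IH -rowOf_cat.
Qed.

Definition sum_coord_vanish m (A : 'M['F_2]_(m, N)) (cs : seq 'I_N) :=
  forall r, (\sum_(c <- cs) A r c = 0)%R.

Lemma sum_coord_vanish_mul m m' (D : 'M['F_2]_(m', m)) (A : 'M_(m, N)) cs :
  sum_coord_vanish A cs -> sum_coord_vanish (D *m A)%R cs.
Proof.
move=> h r; under eq_bigr do rewrite mxE.
by rewrite exchange_big /= big1 // => i _; rewrite -mulr_sumr h mulr0.
Qed.

Lemma sum_coord_vanish_sub m m' (A : 'M['F_2]_(m, N)) (B : 'M_(m', N)) cs :
  (B <= A)%MS -> sum_coord_vanish A cs -> sum_coord_vanish B cs.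
Proof. by case/submxP => D ->; apply: sum_coord_vanish_mul. Qed.

Lemma sum_coord_vanish_adds m m' (A : 'M['F_2]_(m, N)) (B : 'M_(m', N)) cs :
  sum_coord_vanish A cs -> sum_coord_vanish B cs -> sum_coord_vanish (A + B)%MS cs.
Proof.
move=> hA hB; have /sub_addsmxP [[u v] ->] := submx_refl (A + B)%MS => r /=.
under eq_bigr do rewrite mxE.
by rewrite big_split /= (sum_coord_vanish_mul u hA) (sum_coord_vanish_mul v hB) addr0.
Qed.

Lemma sum_coord_vanish_row m (A : 'M['F_2]_(m, N)) (u : 'rV_N) cs :
  sum_coord_vanish A cs -> (u <= A)%MS -> (\sum_(c <- cs) u ord0 c = 0)%R.
Proof. by move=> hA uA; apply: (sum_coord_vanish_sub uA hA). Qed.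

End Coordinates.

Lemma lexeqb_eqfun M (f g : nat -> nat) : f =1 g -> lexeqb M f g.
Proof. by move=> e; apply/allP => i _; rewrite e. Qed.

Lemma lexltb_eqfun M (f g : nat -> nat) : f =1 g -> lexltb M f g = false.
Proof. by move=> e; apply/hasP => [[i _ /andP [_]]]; rewrite e ltnn. Qed.

Lemma omega_ge_mdeg n (y : mon n) i : mdeg y < 2 ^ i -> omega y i = 0.
Proof.
move=> hy; rewrite /omega big1 // => v _; rewrite divn_small //.
by apply: leq_ltn_trans hy; rewrite /mdeg (bigD1 v) //= leq_addr.
Qed.

Lemma matrix_rowE (R : Type) m N (u : 'I_m -> 'rV[R]_N) r c :
  (\matrix_(i < m) u i)%R r c = u r ord0 c.
Proof. by have /rowP /(_ c) := rowK u r; rewrite mxE. Qed.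

Definition meeting_pairs n m : {set {set 'I_n} * 'I_n} :=
  [set p : {set 'I_n} * 'I_n | (#|p.1| == m) && [exists s in p.1, s <= p.2]].

Section WeightTwo.
Variables n m : nat.
Local Notation w := [:: m; 1].
Local Notation d := (wdeg w).
Local Notation N := #|{: {ffun 'I_n -> 'I_d.+1}}|.
Local Notation P := (Pw_mx n w).
Local Notation Pm := (Pwm_mx n w).
Local Notation H := (hit_mx n w).
Local Notation X := ((H :&: P) + Pm)%MS.
Implicit Types (y : mon n) (S T : {set 'I_n}) (u v j : 'I_n).

Lemma wdeg_w : d = m.+2.
Proof. by rewrite /wdeg /= big_ord_recr big_ord_recr big_ord0 /=; lia. Qed.

Definition of_weight y := mdeg y = m.+2 /\ omega y =1 wfun w.

Lemma of_weight_bounded y : of_weight y -> forall v, y v <= d.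
Proof. by case=> hy _ v; rewrite wdeg_w -hy /mdeg (bigD1 v) //= leq_addr. Qed.

Lemma of_weight_xset_sq S j : #|S| = m -> of_weight (xset_sq S j).
Proof.
by move=> hS; split; [rewrite mdeg_xset_sq hS addn2 | rewrite -hS; apply: omega_xset_sq].
Qed.

Lemma of_weight_xset_mul T v : v \in T -> #|T| = m.+1 -> of_weight (xset_mul T v).
Proof.
move=> vT hT; rewrite xset_mul_sq //; apply: of_weight_xset_sq.
by move: hT; rewrite (cardsD1 v T) vT => -[].
Qed.

Lemma expo_mindex_of_weight y : of_weight y -> expo (enum_val (mindex w y)) = y.
Proof. by move=> /of_weight_bounded; apply: expo_mindex. Qed.

Lemma row_Pw_mx y : of_weight y -> row (mindex w y) P = rowOf w [:: y].
Proof.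
move=> hy; rewrite rowK /= expo_mindex_of_weight // ifT //.
by case: hy => -> hom; rewrite wdeg_w eqxx lexeqb_eqfun ?orbT.
Qed.

Lemma Pwm_mx_of_weight y r : of_weight y -> Pm r (mindex w y) = 0%R.
Proof.
move=> hy; rewrite matrix_rowE /=.
case: ifP => [/andP [_ hlt]|_]; last by rewrite mxE.
rewrite rowOf1 expo_mindex_of_weight //.
by case: eqP => // e; move: hlt; rewrite e lexltb_eqfun //; case: hy.
Qed.

Lemma sum_coord_vanish_X (cs : seq 'I_N) :
  (forall i g, 0 < i ->
     (\sum_(c <- cs) ((coef (Sq i g) (expo (enum_val c)) : nat)%:R : 'F_2) = 0)%R) ->
  (forall c, c \in cs -> of_weight (expo (enum_val c))) ->
  sum_coord_vanish X cs.
Proof.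
move=> hSq hW; apply: sum_coord_vanish_adds.
  apply: sum_coord_vanish_sub (capmxSl _ _) _ => r.
  under eq_bigr do rewrite matrix_rowE /=.
  case: ifP => [/andP [hi _]|_]; last by rewrite big1 // => c _; rewrite mxE.
  under eq_bigr do rewrite rowOfE; exact: hSq.
move=> r; rewrite big1_seq // => c /andP [_ /hW hc].
by rewrite -(mindex_expo c) Pwm_mx_of_weight // mindex_expo.
Qed.

Definition in_C y : bool := [exists p : {set 'I_n} * 'I_n,
  [&& #|p.1| == m, [exists s in p.1, s <= p.2] & y == xset_sq p.1 p.2]].

Lemma in_CP y :
  reflect (exists S j, [/\ #|S| = m, [exists s in S, s <= j] & y = xset_sq S j]) (in_C y).
Proof.
apply: (iffP existsP) => [[[S j]] /and3P [/eqP hS hex /eqP ->]|[S [j [hS hex ->]]]].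
  by exists S, j.
by exists (S, j); rewrite /= hS hex !eqxx.
Qed.

Definition Cset : {set 'I_N} := [set c | in_C (expo (enum_val c))].

Definition C_mx : 'M['F_2]_(#|Cset|, N) :=
  (\matrix_(i < #|Cset|) rowOf w [:: expo (enum_val (enum_val i))])%R.

Lemma C_mxE i c : C_mx i c = ((enum_val i == c) : nat)%:R%R.
Proof. by rewrite matrix_rowE rowOf1 (inj_eq (@expo_inj _ _)) (inj_eq enum_val_inj). Qed.

Lemma row_C_mx c (hc : c \in Cset) :
  row (enum_rank_in hc c) C_mx = rowOf w [:: expo (enum_val c)].
Proof. by rewrite rowK enum_rankK_in. Qed.

Lemma rank_C_mx : \rank C_mx = #|Cset|.
Proof.
apply/eqP; rewrite eqn_leq rank_leq_row /=.
have E : (C_mx *m C_mx^T)%R = 1%:M%R.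
  apply/matrixP => i i'; rewrite !mxE (bigD1 (enum_val i)) //= big1 ?addr0.
    rewrite [(C_mx^T)%R _ _]mxE !C_mxE eqxx mul1r (inj_eq enum_val_inj) eq_sym.
    by case: (i' == i).
  by move=> c hc; rewrite [(C_mx^T)%R _ _]mxE !C_mxE eq_sym (negbTE hc) mul0r.
by have := mxrankM_maxl C_mx C_mx^T%R; rewrite E mxrank1.
Qed.

Lemma sum_coord_vanish_C_out c : c \notin Cset -> sum_coord_vanish C_mx [:: c].
Proof.
move=> hc r; rewrite big_seq1 C_mxE.
by case: eqP => // e; move: hc; rewrite -e enum_valP.
Qed.

Lemma sum_coord_vanish_X_cube S j : j \in S -> #|S| = m ->
  sum_coord_vanish X [:: mindex w (xset_sq S j)].
Proof.
move=> jS hS; have hz := of_weight_xset_sq j hS.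
apply: sum_coord_vanish_X => [i g hi|c]; last first.
  by rewrite inE => /eqP ->; rewrite expo_mindex_of_weight.
by rewrite big_seq1 expo_mindex_of_weight // coef_Sq (negbTE (xset_sq_notin_Sq _ jS hi)).
Qed.

Lemma sum_coord_vanish_X_mate S j t : j \notin S -> t \in S -> #|S| = m ->
  sum_coord_vanish X [:: mindex w (xset_sq S j); mindex w (xset_mul (j |: S) t)].
Proof.
move=> jS tS hS; have hz := of_weight_xset_sq j hS.
have ht : of_weight (xset_mul (j |: S) t).
  by apply: of_weight_xset_mul; rewrite ?setU1r // cardsU1 jS hS.
apply: sum_coord_vanish_X => [i g hi|c]; last first.
  by rewrite !inE => /orP [] /eqP ->; rewrite expo_mindex_of_weight.
rewrite big_cons big_seq1 !expo_mindex_of_weight // !coef_Sq -(Sq_mate _ tS jS hi).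
exact: (addrr_pchar2 (pchar_Fp (isT : prime 2))).
Qed.

Lemma mate_notin_C S j t : t \in S -> t < j -> (forall s, s \in S -> t <= s) ->
  ~~ in_C (xset_mul (j |: S) t).
Proof.
move=> tS tj hmin; apply/in_CP => -[S' [j' [_ /existsP [s /andP [sS' sj']]]]].
rewrite xset_mul_sq ?setU1r // => /xset_sq_inj [eS ej]; subst S' j'.
move: sS'; rewrite in_setD1 in_setU1 => /andP [st /orP [/eqP sj|sS]].
  by move: sj'; rewrite sj leqNgt tj.
by move: st; rewrite -val_eqE /= eqn_leq sj' hmin.
Qed.

Lemma capmx_X_C (x : 'rV['F_2]_N) : (x <= X)%MS -> (x <= C_mx)%MS -> x = 0%R.
Proof.
move=> xX xC; apply/rowP => c; rewrite mxE.
case: (boolP (c \in Cset)) => hc; last first.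
  by have := sum_coord_vanish_row (sum_coord_vanish_C_out hc) xC; rewrite big_seq1.
have ec := mindex_expo c; move: hc; rewrite inE => /in_CP [S [j [hS hex ez]]].
rewrite ez in ec; rewrite -ec.
case: (boolP (j \in S)) => jS.
  by have := sum_coord_vanish_row (sum_coord_vanish_X_cube jS hS) xX; rewrite big_seq1.
have [t [tS tj hmin]] := min_elt_below hex jS.
have ht : mindex w (xset_mul (j |: S) t) \notin Cset.
  rewrite inE expo_mindex_of_weight ?mate_notin_C //.
  by apply: of_weight_xset_mul; rewrite ?setU1r // cardsU1 jS hS.
have := sum_coord_vanish_row (sum_coord_vanish_C_out ht) xC; rewrite big_seq1 => x0.
have := sum_coord_vanish_row (sum_coord_vanish_X_mate jS tS hS) xX.
by rewrite big_cons big_seq1 x0 addr0.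
Qed.

Lemma Pwm_mx_sub : (Pm <= P)%MS.
Proof.
apply/row_subP => r; rewrite rowK /=.
case: ifP => [/andP [h1 h2]|_]; last exact: sub0mx.
have <- : row r P = rowOf w [:: expo (enum_val r)] by rewrite rowK /= h1 h2.
exact: row_sub.
Qed.

Lemma C_mx_sub : (C_mx <= P)%MS.
Proof.
apply/row_subP => i; rewrite rowK.
have := enum_valP i; rewrite inE => /in_CP [S [j [hS _ ->]]].
by rewrite -row_Pw_mx; [exact: row_sub | exact: of_weight_xset_sq].
Qed.

Lemma Sq1_xset_sub T : #|T| = m.+1 ->
  (rowOf w (Sq 1 (xset T)) <= H :&: P)%MS.
Proof.
move=> hT; rewrite sub_capmx; apply/andP; split.
  have hb v : xset T v <= d by rewrite ffunE wdeg_w; case: (v \in T).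
  set r := enum_rank ((inord 1 : 'I_d.+1), mcode w (xset T)).
  have <- : row r H = rowOf w (Sq 1 (xset T)).
    have d1 : 1 < d.+1 by rewrite ltnS wdeg_w.
    rewrite rowK /= enum_rankK /= inordK // expo_mcode // ifT //.
    by rewrite mdeg_xset hT wdeg_w addn1 eqxx.
  exact: row_sub.
have -> : rowOf w (Sq 1 (xset T)) = rowOf w [seq xset_mul T v | v <- enum T].
  by apply: rowOf_eq => y; rewrite coef_Sq coef_uniq ?map_xset_mul_uniq ?enum_uniq // Sq1_xset.
rewrite rowOf_map big_seq; apply: summx_sub => v; rewrite mem_enum => vT.
by rewrite -row_Pw_mx; [exact: row_sub | exact: of_weight_xset_mul].
Qed.

Lemma rowOf_xset_sq S j : j \notin S ->
  rowOf w [:: xset_sq S j] =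
  (rowOf w (Sq 1 (xset (j |: S))) + \sum_(v <- enum S) rowOf w [:: xset_mul (j |: S) v])%R.
Proof.
move=> jS; rewrite -rowOf_map -rowOf_cat; apply: rowOf_eq => y.
rewrite /coef count_cat !count_uniq_mem ?Sq_uniq ?map_xset_mul_uniq ?enum_uniq //.
have eT : enum (j |: S) =i j :: enum S by move=> u; rewrite inE !mem_enum in_setU1.
rewrite Sq1_xset (eq_mem_map (xset_mul (j |: S)) eT) map_cons in_cons.
rewrite xset_sq_mul // mem_seq1 eq_sym.
case: (eqVneq y (xset_mul (j |: S) j)) => [->|] /=; last by case: (_ \in _).
by rewrite (mem_map (@xset_mul_inj _ _)) mem_enum (negbTE jS).
Qed.

Lemma rowOf_of_weight_sub y : of_weight y -> (rowOf w [:: y] <= X + C_mx)%MS.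
Proof.
move=> /[dup] hy [_ /omega_weight2_xset_sq [S [j [hS ey]]]].
case: (boolP [exists s in S, s <= j]) => hex.
  have hc : mindex w y \in Cset.
    by rewrite inE expo_mindex_of_weight //; apply/in_CP; exists S, j.
  by rewrite -(expo_mindex_of_weight hy) -(row_C_mx hc) (submx_trans (row_sub _ _)) ?addsmxSr.
have hjS s : s \in S -> j < s.
  by move=> sS; rewrite ltnNge; apply: contra hex => sj; apply/existsP; exists s; rewrite sS.
have jS : j \notin S by apply/negP => /hjS; rewrite ltnn.
rewrite ey rowOf_xset_sq //; apply: addmx_sub.
  apply: submx_trans (addsmxSl _ _); apply: submx_trans (addsmxSl _ _).
  by rewrite Sq1_xset_sub // cardsU1 jS hS.
apply: submx_trans (addsmxSr _ _); rewrite big_seq; apply: summx_sub => v.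
rewrite mem_enum => vS; have vT : v \in j |: S by rewrite setU1r.
have hv : of_weight (xset_mul (j |: S) v).
  by apply: of_weight_xset_mul; rewrite // cardsU1 jS hS.
have hc : mindex w (xset_mul (j |: S) v) \in Cset.
  rewrite inE expo_mindex_of_weight //; apply/in_CP; exists ((j |: S) :\ v), v.
  rewrite xset_mul_sq //; split => //.
    by move: (cardsD1 v (j |: S)); rewrite vT cardsU1 jS hS => /addnI <-.
  apply/existsP; exists j; have jv := hjS v vS.
  rewrite in_setD1 setU11 (ltnW jv) !andbT.
  by apply: contraTneq jv => ->; rewrite ltnn.
by rewrite -(expo_mindex_of_weight hv) -(row_C_mx hc) row_sub.
Qed.

Lemma Pw_mx_sub : (P <= X + C_mx)%MS.
Proof.
apply/row_subP => r; rewrite rowK /=; set y := expo (enum_val r).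
case: ifP => [/andP [/eqP hdeg hl]|_]; last exact: sub0mx.
case: (boolP (lexltb (d + 2) (omega y) (wfun w))) => hlt.
  have <- : row r Pm = rowOf w [:: y] by rewrite rowK /= hdeg eqxx hlt.
  by apply: submx_trans (addsmxSl _ _); rewrite (submx_trans _ (addsmxSr _ _)) ?row_sub.
apply: rowOf_of_weight_sub; split; first by rewrite hdeg wdeg_w.
move: hl; rewrite (negbTE hlt) /= => /allP heq i.
case: (ltnP i (d + 2)) => hi; first by apply/eqP/heq; rewrite mem_iota.
rewrite wdeg_w in hi; rewrite /wfun nth_default /=; last by lia.
rewrite omega_ge_mdeg // hdeg wdeg_w; apply: leq_trans (ltn_expl _ (ltnSn 1)) _.
by rewrite leq_exp2l //; lia.
Qed.

Lemma QPdim_weight_two : QPdim n w = #|Cset|.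
Proof.
rewrite /QPdim.
have -> : \rank P = \rank (X + C_mx)%MS.
  apply/eqP; rewrite eqn_leq !mxrankS ?Pw_mx_sub //.
  by rewrite addsmx_sub C_mx_sub andbT addsmx_sub capmxSr Pwm_mx_sub.
have cap0 : \rank (X :&: C_mx)%MS = 0.
  apply/eqP; rewrite mxrank_eq0 -submx0; apply/row_subP => i; rewrite submx0.
  apply/eqP/capmx_X_C; apply: submx_trans (row_sub _ _) _.
    exact: capmxSl.
  exact: capmxSr.
by have := mxrank_sum_cap X C_mx; rewrite cap0 addn0 rank_C_mx => ->; rewrite addKn.
Qed.

Lemma card_Cset : #|Cset| = #|meeting_pairs n m|.
Proof.
have -> : Cset = [set mindex w (xset_sq p.1 p.2) | p in meeting_pairs n m].
  rewrite /meeting_pairs; apply/setP => c; rewrite inE; apply/idP/imsetP.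
    case/in_CP => S [j [hS hex ez]]; exists (S, j); first by rewrite inE /= hS eqxx.
    by rewrite /= -ez mindex_expo.
  case=> [[S j]]; rewrite inE /= => /andP [/eqP hS hex] ->.
  rewrite expo_mindex_of_weight; last exact: of_weight_xset_sq.
  by apply/in_CP; exists S, j.
apply: card_in_imset => -[S j] [S' j']; rewrite /meeting_pairs !inE /=.
move=> /andP [/eqP hS _] /andP [/eqP hS' _].
move=> /(congr1 (fun c => expo (enum_val c))) /=.
rewrite !expo_mindex_of_weight; try exact: of_weight_xset_sq.
by case/xset_sq_inj => -> ->.
Qed.

End WeightTwo.

Lemma card_ord_gt n (j : 'I_n) : #|[set s : 'I_n | j < s]| = n - j.+1.
Proof.
rewrite -sum_nat_bool -(big_mkord xpredT (fun s => (j < s : nat))).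
rewrite (big_cat_nat (n := j.+1)) ?ltn_ord //= big_nat_cond big1; last first.
  by move=> i /andP [/andP [_ h] _]; rewrite ltnNge -ltnS h.
rewrite add0n big_nat_cond (eq_bigr (fun _ => 1)); last first.
  by move=> i /andP [/andP [h _] _]; rewrite h.
by rewrite -big_nat_cond sum_nat_const_nat muln1.
Qed.

Lemma card_sets_meeting_prefix n m (j : 'I_n) :
  #|[set S : {set 'I_n} | (#|S| == m) && [exists s in S, s <= j]]| + 'C(n - j.+1, m)
  = 'C(n, m).
Proof.
rewrite -card_ord_gt -cards_draws -[in RHS](card_ord n) -card_draws.
rewrite -!sum_nat_bool -big_split /=; apply: eq_bigr => S _.
case: (#|S| == m); rewrite ?andbF ?andbT //=.
case: (boolP [exists s in S, s <= j]) => [/existsP [s /andP [sS sj]]|hn].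
  suff /negbTE -> : ~~ (S \subset [set s : 'I_n | j < s]) by [].
  by apply/subsetPn; exists s; rewrite // inE -leqNgt.
suff -> : S \subset [set s : 'I_n | j < s] by [].
apply/subsetP => s sS; rewrite inE ltnNge; apply: contra hn => sj.
by apply/existsP; exists s; rewrite sS.
Qed.

Lemma sum_bin_tail m : \sum_(j < m.+2) 'C(m.+2 - j.+1, m) = m.+2.
Proof.
rewrite !big_ord_recl big1 /= => [|i _]; last first.
  by rewrite bin_small // /bump /= !add1n subSS; have := ltn_ord i; lia.
by rewrite /bump /= addn0 !subSS !subn0 binSn binn addn1.
Qed.

Lemma mul2_bin2 n : 2 * 'C(n, 2) = n * n.-1.
Proof. by elim: n => [//|n IH]; rewrite binS bin1 mulnDr IH; case: n {IH} => //= n; lia. Qed.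

Lemma card_meeting_pairs n m : n = m.+2 -> #|meeting_pairs n m| = m * 'C(n.+1, 2).
Proof.
move=> ->; rewrite -sum_nat_bool.
rewrite -(pair_big xpredT xpredT (fun (S : {set 'I_m.+2}) (j : 'I_m.+2) =>
  ((#|S| == m) && [exists s in S, s <= j] : nat))) /= exchange_big /=.
have : \sum_(j < m.+2) \sum_(S : {set 'I_m.+2}) ((#|S| == m) && [exists s in S, s <= j] : nat)
       + \sum_(j < m.+2) 'C(m.+2 - j.+1, m) = m.+2 * 'C(m.+2, m).
  rewrite -big_split /= -[X in X * _](card_ord m.+2) -sum_nat_const.
  by apply: eq_bigr => j _; rewrite sum_nat_bool card_sets_meeting_prefix.
have -> : 'C(m.+2, m) = 'C(m.+2, 2) by rewrite -(@bin_sub m.+2 2) // !subSS subn0.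
rewrite sum_bin_tail => /(canRL (addnK _)) ->.
by rewrite [in RHS]binS bin1; have /= := mul2_bin2 m.+2; nia.
Qed.

Theorem lemma3p8 (k : nat) (hk : 4 <= k) :
  (forall z : mon (k - 1),
     inC z <-> (admissible z /\ omega z =1 wfun [:: k - 3; 1])) /\
  QPdim (k - 1) [:: k - 3; 1] = (k - 3) * 'C(k, 2).
Proof.
split => [z|]; first exact: admissible_weight2P.
have ekm : k - 1 = (k - 3).+2 by lia.
rewrite QPdim_weight_two card_Cset (card_meeting_pairs ekm).
by rewrite (_ : (k - 1).+1 = k) //; lia.
Qed.
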